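(* Let $A$ be a differential ring and let $(A_\alpha)_{\alpha\in I}$ be a direct system (over a directed set $I$) of differential $A$-algebras with structure differential homomorphisms $\nu_\alpha\colon A\to A_\alpha$ compatible with the transition maps. Suppose that for every $\alpha$ the contraction map $\nu_\alpha^*\colon\operatorname{Spec}^\Delta A_\alpha\to\operatorname{Spec}^\Delta A$ is a homeomorphism. Let $A'=\varinjlim_\alpha A_\alpha$ and let $\nu\colon A\to A'$ be the induced homomorphism. Then $\nu^*\colon\operatorname{Spec}^\Delta A'\to\operatorname{Spec}^\Delta A$ is a homeomorphism.
   Context: All rings are commutative with unit; homomorphisms preserve the unit. A differential ring is a ring equipped with finitely many pairwise commuting derivations; a differential homomorphism is a ring homomorphism commuting with the derivations. For a differential ring $A$, $\operatorname{Spec}^\Delta A$ is the set of prime ideals of $A$ closed under all the derivations, with the Kolchin topology whose closed sets are $V(E)=\{\mathfrak p\in\operatorname{Spec}^\Delta A: E\subseteq\mathfrak p\}$ for $E\subseteq A$. For a differential homomorphism $f\colon A\to B$, $f^*\colon\operatorname{Spec}^\Delta B\to\operatorname{Spec}^\Delta A$ is $f^*(\mathfrak q)=f^{-1}(\mathfrak q)$. *)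

From HB Require Import structures.
From mathcomp Require Import all_boot all_order all_algebra.
Set Implicit Arguments. Unset Strict Implicit. Unset Printing Implicit Defensive.
Import GRing.Theory.
Local Open Scope ring_scope.

Definition is_derivation (R : comPzRingType) (d : R -> R) : Prop :=
  (forall x y : R, d (x + y) = d x + d y) /\
  (forall x y : R, d (x * y) = d x * y + x * d y).

(* A differential ring with m pairwise commuting derivations (indexed by 'I_m).
   Rings are commutative with unit; the zero ring is allowed. *)
Record dring (m : nat) := DRing {
  dcarrier :> comPzRingType;
  der : 'I_m -> dcarrier -> dcarrier;
  der_deriv : forall i, is_derivation (der i);
  der_comm : forall i j (x : dcarrier), der i (der j x) = der j (der i x)
}.
Arguments der {m} _ _ _.

Definition is_dhom (m : nat) (A B : dring m) (f : {rmorphism A -> B}) : Prop :=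
  forall (i : 'I_m) (x : A), f (der A i x) = der B i (f x).

Definition is_dprime (m : nat) (A : dring m) (P : A -> Prop) : Prop :=
  [/\ P 0,
      (forall x y, P x -> P y -> P (x + y)),
      (forall a x, P x -> P (a * x)),
      ~ P 1 &
      (forall x y, P (x * y) -> P x \/ P y)] /\
  (forall i x, P x -> P (der A i x)).

Definition dSpec (m : nat) (A : dring m) := {P : A -> Prop | is_dprime P}.

Definition kclosed (m : nat) (A : dring m) (C : dSpec A -> Prop) : Prop :=
  exists E : A -> Prop, forall p : dSpec A, C p <-> (forall x, E x -> sval p x).

Definition kcontinuous (m : nat) (A B : dring m) (g : dSpec B -> dSpec A) : Prop :=
  forall C : dSpec A -> Prop, kclosed C -> kclosed (fun q => C (g q)).

Definition khomeo (m : nat) (A B : dring m) (g : dSpec B -> dSpec A) : Prop :=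
  exists h : dSpec A -> dSpec B,
    [/\ cancel g h, cancel h g, kcontinuous g & kcontinuous h].

Lemma comap_dprime (m : nat) (A B : dring m) (f : {rmorphism A -> B})
  (hf : is_dhom f) (Q : B -> Prop) :
  is_dprime Q -> is_dprime (fun x => Q (f x)).
Proof.
case=> [[Q0 QD QM Q1 QP] Qd]; split; first split => /=.
- by rewrite rmorph0.
- by move=> x y Hx Hy; rewrite rmorphD; apply: QD.
- by move=> a x Hx; rewrite rmorphM; apply: QM.
- by rewrite rmorph1.
- by move=> x y; rewrite rmorphM; apply: QP.
- by move=> i x Hx; rewrite hf; apply: Qd.
Qed.

Definition comap (m : nat) (A B : dring m) (f : {rmorphism A -> B})
  (hf : is_dhom f) (q : dSpec B) : dSpec A :=
  exist _ (fun x => sval q (f x)) (comap_dprime hf (svalP q)).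

Definition directed_set (I : Type) (le : I -> I -> Prop) : Prop :=
  [/\ inhabited I, (forall a, le a a), (forall a b c, le a b -> le b c -> le a c)
    & (forall a b, exists c, le a c /\ le b c)].

Definition direct_system (m : nat) (I : Type) (le : I -> I -> Prop)
  (As : I -> dring m) (phi : forall a b, le a b -> {rmorphism As a -> As b}) : Prop :=
  [/\ (forall a b (h : le a b), is_dhom (phi a b h)),
      (forall a (h : le a a) x, phi a a h x = x)
    & (forall a b c (hab : le a b) (hbc : le b c) (hac : le a c) x,
         phi b c hbc (phi a b hab x) = phi a c hac x)].

Definition is_dcolimit (m : nat) (I : Type) (le : I -> I -> Prop)
  (As : I -> dring m) (phi : forall a b, le a b -> {rmorphism As a -> As b})
  (A' : dring m) (iota : forall a, {rmorphism As a -> A'}) : Prop :=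
  [/\ (forall a, is_dhom (iota a)),
      (forall a b (h : le a b) x, iota b (phi a b h x) = iota a x)
    & (forall (B : dring m) (g : forall a, {rmorphism As a -> B}),
         (forall a, is_dhom (g a)) ->
         (forall a b (h : le a b) x, g b (phi a b h x) = g a x) ->
         exists u : {rmorphism A' -> B},
           [/\ is_dhom u, (forall a x, u (iota a x) = g a x)
             & (forall u' : {rmorphism A' -> B},
                  (forall a x, u' (iota a x) = g a x) -> forall y, u' y = u y)])].

(* The limit A' is only given by its universal property, so we first build a concrete
   model: the ring of germs (classes of elements of the stages, two elements being
   identified when they agree at a later stage), with stagewise operations and
   derivations.  Comparing A' with it shows that every element of A' comes from some
   stage and that iota_a x = iota_b z exactly when x and z agree at a later stage.

   Consequently a family of differential primes p_a of the stages that is compatible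
   with the transition maps glues to the differential prime U_a iota_a(p_a) of A', and
   points of Spec^Delta A' are determined by their contractions to the stages.  Given
   inverses inv_a of the nu_a^*, the primes inv_a(p) are compatible, and gluing them
   gives the inverse of nu^*; it is continuous because the preimage of a closed set is an
   intersection of preimages under the continuous inv_a.  Continuity of nu^* itself is
   the general continuity of contraction maps. *)

From HB Require Import structures.
From mathcomp Require Import all_boot all_order all_algebra.
From mathcomp Require Import boolp.
Unset Printing Implicit Defensive.
Import GRing.Theory.
Local Open Scope ring_scope.

Section Germs.
Context {m : nat} {I : Type} {le : I -> I -> Prop} {As : I -> dring m}
  {phi : forall a b, le a b -> {rmorphism As a -> As b}}.
Hypotheses (dirI : directed_set le) (sysA : direct_system phi).

Lemma le_refl a : le a a. Proof. by case: dirI. Qed.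
Lemma le_trans {a b c} : le a b -> le b c -> le a c. Proof. by case: dirI => _ _ + _; apply. Qed.
Lemma le_ub a b : exists c, le a c /\ le b c. Proof. by case: dirI. Qed.

Lemma phi_id {a} (h : le a a) x : phi a a h x = x. Proof. by case: sysA => _ + _; apply. Qed.
Lemma phi_comp {a b c} (hab : le a b) (hbc : le b c) hac x :
  phi b c hbc (phi a b hab x) = phi a c hac x.
Proof. by case: sysA => _ _; apply. Qed.

Definition germ_rel a (x : As a) b (y : As b) : Prop :=
  exists c (hac : le a c) (hbc : le b c), phi a c hac x = phi b c hbc y.

Lemma germ_rel_sym {a x b y} : germ_rel a x b y -> germ_rel b y a x.
Proof. by case=> c [h1 [h2 e]]; exists c, h2, h1. Qed.

Lemma germ_rel_trans {a x b y c z} :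
  germ_rel a x b y -> germ_rel b y c z -> germ_rel a x c z.
Proof.
case=> d [had [hbd e1]] [e [hbe [hce e2]]]; have [f [hdf hef]] := le_ub d e.
exists f, (le_trans had hdf), (le_trans hce hef); have hbf := le_trans hbe hef.
rewrite -(phi_comp had hdf (le_trans had hdf)) e1 (phi_comp hbd hdf hbf).
by rewrite -(phi_comp hbe hef hbf) e2; apply: phi_comp.
Qed.

Definition germ := {c : forall b, As b -> Prop | exists a x, c = germ_rel a x}.
Definition cl a (x : As a) : germ := exist _ (germ_rel a x) (ex_intro _ a (ex_intro _ x erefl)).

Lemma clP {a x b y} : cl a x = cl b y <-> germ_rel a x b y.
Proof.
split=> [/(congr1 sval) /= -> | r]; first by exists b, (le_refl b), (le_refl b).
apply: eq_exist; apply: functional_extensionality_dep => c; apply: funext => z.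
by apply: propext; split; apply: germ_rel_trans => //; apply: germ_rel_sym.
Qed.

Lemma cl_lift {a b} (h : le a b) x : cl b (phi a b h x) = cl a x.
Proof. by apply/clP; exists b, (le_refl b), h; rewrite phi_id. Qed.

Lemma germ_at (c : germ) : exists a x, c = cl a x.
Proof. by case: c => c [a [x E]]; exists a, x; apply: eq_exist. Qed.

Lemma germ_at_after d (c : germ) : exists e (h : le d e) z, c = cl e z.
Proof.
have [a [x ->]] := germ_at c; have [e [hae hde]] := le_ub a d.
by exists e, hde, (phi a e hae x); rewrite cl_lift.
Qed.

Lemma germ_ind1 (P : germ -> Prop) : (forall d z, P (cl d z)) -> forall c, P c.
Proof. by move=> H c; have [a [x ->]] := germ_at c. Qed.

Lemma germ_ind2 (P : germ -> germ -> Prop) :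
  (forall d z1 z2, P (cl d z1) (cl d z2)) -> forall c1 c2, P c1 c2.
Proof.
move=> H c1 c2; have [a [x ->]] := germ_at c1; have [e [h [z ->]]] := germ_at_after a c2.
by rewrite -(cl_lift h).
Qed.

Lemma germ_ind3 (P : germ -> germ -> germ -> Prop) :
  (forall d z1 z2 z3, P (cl d z1) (cl d z2) (cl d z3)) -> forall c1 c2 c3, P c1 c2 c3.
Proof.
move=> H c1 c2 c3; have [a [x ->]] := germ_at c1; have [e [h [z ->]]] := germ_at_after a c2.
have [f [h' [w ->]]] := germ_at_after e c3.
by rewrite -(cl_lift h) -(cl_lift h' (phi a e h x)) -(cl_lift h' z).
Qed.

Lemma germ_pair (c1 c2 : germ) : exists t : {d : I & (As d * As d)%type},
  c1 = cl (tag t) (tagged t).1 /\ c2 = cl (tag t) (tagged t).2.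
Proof.
by move: c1 c2; apply: germ_ind2 => d z1 z2; exists (Tagged (fun d => (As d * As d)%type) (z1, z2)).
Qed.

Section LiftOp.
Variable op : forall a, As a -> As a -> As a.
Hypothesis op_phi : forall a b (h : le a b) x y,
  phi a b h (op a x y) = op b (phi a b h x) (phi a b h y).

Definition lift2 (c1 c2 : germ) : germ :=
  let t := sval (cid (germ_pair c1 c2)) in cl (tag t) (op _ (tagged t).1 (tagged t).2).

Lemma lift2_wd {d z1 z2 d' w1 w2} : cl d z1 = cl d' w1 -> cl d z2 = cl d' w2 ->
  cl d (op d z1 z2) = cl d' (op d' w1 w2).
Proof.
move=> /clP [e1 [h1 [h1' E1]]] /clP [e2 [h2 [h2' E2]]].
have [f [he1 he2]] := le_ub e1 e2; apply/clP.
exists f, (le_trans h1 he1), (le_trans h1' he1); rewrite !op_phi; congr (op f _ _).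
- by rewrite -(phi_comp h1 he1) -(phi_comp h1' he1) E1.
- by rewrite -(phi_comp h2 he2) -(phi_comp h2' he2) E2.
Qed.

Lemma lift2E d z1 z2 : lift2 (cl d z1) (cl d z2) = cl d (op d z1 z2).
Proof. by rewrite /lift2; case: cid => t [E1 E2] /=; apply: lift2_wd. Qed.
End LiftOp.

Definition lift1 (op : forall a, As a -> As a) (c : germ) : germ :=
  lift2 (fun a x _ => op a x) c c.

Lemma lift1E (op : forall a, As a -> As a)
    (op_phi : forall a b (h : le a b) x, phi a b h (op a x) = op b (phi a b h x)) d z :
  lift1 op (cl d z) = cl d (op d z).
Proof. exact: (lift2E (fun a x _ => op a x)). Qed.

Lemma index_exists : exists _ : I, True.
Proof. by case: dirI => [[a]] _ _ _; exists a. Qed.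
Definition index0 : I := sval (cid index_exists).

Lemma cl_const (k : forall a, As a) (k_phi : forall a b h, phi a b h (k a) = k b) d :
  cl index0 (k index0) = cl d (k d).
Proof. by have [e [h h']] := le_ub index0 d; rewrite -(cl_lift h) -(cl_lift h') !k_phi. Qed.

Definition germ_add := lift2 (fun a (x y : As a) => x + y).
Definition germ_mul := lift2 (fun a (x y : As a) => x * y).
Definition germ_opp := lift1 (fun a (x : As a) => - x).
Definition germ_zero := cl index0 0.
Definition germ_one := cl index0 1.

Lemma germ_addE d z1 z2 : germ_add (cl d z1) (cl d z2) = cl d (z1 + z2).
Proof. by apply: lift2E => *; apply: rmorphD. Qed.
Lemma germ_mulE d z1 z2 : germ_mul (cl d z1) (cl d z2) = cl d (z1 * z2).
Proof. by apply: lift2E => *; apply: rmorphM. Qed.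
Lemma germ_oppE d z : germ_opp (cl d z) = cl d (- z).
Proof. by apply: lift1E => *; apply: rmorphN. Qed.
Lemma germ_zeroE d : germ_zero = cl d 0.
Proof. by apply: (cl_const (fun a => 0)) => *; apply: rmorph0. Qed.
Lemma germ_oneE d : germ_one = cl d 1.
Proof. by apply: (cl_const (fun a => 1)) => *; apply: rmorph1. Qed.

Lemma germ_addA : associative germ_add.
Proof. by apply: germ_ind3 => d x y z; rewrite !germ_addE addrA. Qed.
Lemma germ_addC : commutative germ_add.
Proof. by apply: germ_ind2 => d x y; rewrite !germ_addE addrC. Qed.
Lemma germ_add0 : left_id germ_zero germ_add.
Proof. by apply: germ_ind1 => d x; rewrite (germ_zeroE d) germ_addE add0r. Qed.
Lemma germ_addN : left_inverse germ_zero germ_opp germ_add.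
Proof. by apply: germ_ind1 => d x; rewrite (germ_zeroE d) germ_oppE germ_addE addNr. Qed.
Lemma germ_mulA : associative germ_mul.
Proof. by apply: germ_ind3 => d x y z; rewrite !germ_mulE mulrA. Qed.
Lemma germ_mulC : commutative germ_mul.
Proof. by apply: germ_ind2 => d x y; rewrite !germ_mulE mulrC. Qed.
Lemma germ_mul1 : left_id germ_one germ_mul.
Proof. by apply: germ_ind1 => d x; rewrite (germ_oneE d) germ_mulE mul1r. Qed.
Lemma germ_mulDl : left_distributive germ_mul germ_add.
Proof. by apply: germ_ind3 => d x y z; rewrite !(germ_addE, germ_mulE) mulrDl. Qed.

HB.instance Definition _ := gen_eqMixin germ.
HB.instance Definition _ := gen_choiceMixin germ.
HB.instance Definition _ := GRing.isZmodule.Build germ germ_addA germ_addC germ_add0 germ_addN.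
HB.instance Definition _ :=
  GRing.Zmodule_isComPzRing.Build germ germ_mulA germ_mulC germ_mul1 germ_mulDl.

Lemma clD d z1 z2 : cl d z1 + cl d z2 = cl d (z1 + z2). Proof. exact: germ_addE. Qed.
Lemma clM d z1 z2 : cl d z1 * cl d z2 = cl d (z1 * z2). Proof. exact: germ_mulE. Qed.
Lemma clB d z1 z2 : cl d z1 - cl d z2 = cl d (z1 - z2).
Proof. by rewrite -clD; congr (_ + _); apply: germ_oppE. Qed.
Lemma cl1 d : cl d 1 = 1. Proof. by rewrite -germ_oneE. Qed.

Definition germ_der (i : 'I_m) : germ -> germ := lift1 (fun a => der (As a) i).

Lemma germ_derE i d z : germ_der i (cl d z) = cl d (der (As d) i z).
Proof. by apply: lift1E => a b h x; case: sysA => + _ _; apply. Qed.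

Lemma germ_der_deriv i : is_derivation (germ_der i : germ -> germ).
Proof.
split; apply: germ_ind2 => d x y; have [derD derM] := der_deriv (As d) i.
- by rewrite clD !germ_derE clD derD.
- by rewrite clM !germ_derE !clM clD derM.
Qed.

Lemma germ_der_comm i j (c : germ) : germ_der i (germ_der j c) = germ_der j (germ_der i c).
Proof. by move: c; apply: germ_ind1 => d z; rewrite !germ_derE der_comm. Qed.

Definition germ_dring : dring m := DRing germ_der_deriv germ_der_comm.

Definition germ_in (a : I) : As a -> germ_dring := cl a.

Lemma germ_in_zmod a : zmod_morphism (germ_in a).
Proof. by move=> x y; rewrite /germ_in clB. Qed.
Lemma germ_in_monoid a : monoid_morphism (germ_in a).
Proof. by split=> [|x y]; rewrite /germ_in ?cl1 ?clM. Qed.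
HB.instance Definition _ a := GRing.isZmodMorphism.Build _ _ (germ_in a) (germ_in_zmod a).
HB.instance Definition _ a := GRing.isMonoidMorphism.Build _ _ (germ_in a) (germ_in_monoid a).

Lemma germ_in_dhom a : is_dhom (germ_in a : {rmorphism As a -> germ_dring}).
Proof. by move=> i x; rewrite /= /germ_in germ_derE. Qed.

Lemma germ_in_compat a b (h : le a b) x : germ_in b (phi a b h x) = germ_in a x.
Proof. exact: cl_lift. Qed.

Section GermOut.
Context {B : comPzRingType} {g : forall a, {rmorphism As a -> B}}.
Hypothesis g_compat : forall a b (h : le a b) x, g b (phi a b h x) = g a x.

Lemma germ_repr (c : germ) : exists t : {a : I & As a}, c = cl (tag t) (tagged t).
Proof. by have [a [x ->]] := germ_at c; exists (Tagged As x). Qed.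

Definition germ_out (c : germ) : B :=
  let t := sval (cid (germ_repr c)) in g (tag t) (tagged t).

Lemma germ_outE d z : germ_out (cl d z) = g d z.
Proof.
rewrite /germ_out; case: cid => t /= /clP [c [h1 [h2 E]]].
by rewrite -(g_compat _ _ h1) E g_compat.
Qed.

Lemma germ_out_zmod : zmod_morphism germ_out.
Proof. by apply: germ_ind2 => d x y; rewrite clB !germ_outE rmorphB. Qed.
Lemma germ_out_monoid : monoid_morphism germ_out.
Proof.
split; first by rewrite -(cl1 index0) germ_outE rmorph1.
by apply: germ_ind2 => d x y; rewrite clM !germ_outE rmorphM.
Qed.
HB.instance Definition _ := GRing.isZmodMorphism.Build germ B germ_out germ_out_zmod.
HB.instance Definition _ := GRing.isMonoidMorphism.Build germ B germ_out germ_out_monoid.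

Definition germ_factor : {rmorphism germ_dring -> B} := germ_out.

Lemma germ_factorE d z : germ_factor (cl d z) = g d z.
Proof. exact: germ_outE. Qed.
End GermOut.

End Germs.

Lemma dspec_eq (m : nat) (A : dring m) (p q : dSpec A) :
  (forall x, sval p x <-> sval q x) -> p = q.
Proof. by case: p q => P hP [Q hQ] pq; apply: eq_exist; apply: funext => x; apply: propext. Qed.

Lemma comap_compose {m : nat} {A B C : dring m} {f : {rmorphism A -> B}}
    {g : {rmorphism B -> C}} {h : {rmorphism A -> C}} (hf : is_dhom f) (hg : is_dhom g)
    (hh : is_dhom h) (q : dSpec C) :
  (forall x, h x = g (f x)) -> comap hh q = comap hf (comap hg q).
Proof. by move=> hE; apply: dspec_eq => x /=; rewrite hE. Qed.

(* f^* is continuous: the preimage of V(E) is V(f(E)). *)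
Lemma comap_continuous (m : nat) (A B : dring m) (f : {rmorphism A -> B}) (hf : is_dhom f) :
  kcontinuous (comap hf).
Proof.
move=> C [E CE]; exists (fun y => exists2 x, E x & y = f x) => q; rewrite CE /=.
by split=> [qE y [x Ex ->] | qE x Ex]; [apply: qE | apply: qE; exists x].
Qed.

(* Kolchin-closed sets are stable under arbitrary intersections:
   the intersection of the V(E_j) is V(union of the E_j). *)
Lemma kclosed_bigcap {m : nat} {A : dring m} {J : Type} (Cs : J -> dSpec A -> Prop)
    (C : dSpec A -> Prop) :
  (forall j, kclosed (Cs j)) -> (forall p, C p <-> forall j, Cs j p) -> kclosed C.
Proof.
move=> Cs_closed CE.
exists (fun x => exists j (E : A -> Prop),
  (forall p, Cs j p <-> forall y, E y -> sval p y) /\ E x) => p.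
rewrite CE; split=> [pC x [j [E [CsE Ex]]] | pE j].
  by apply: (proj1 (CsE p)) Ex; apply: pC.
by have [E CsE] := Cs_closed j; apply/CsE => x Ex; apply: pE; exists j, E.
Qed.

Section Colimit.
Context {m : nat} {I : Type} {le : I -> I -> Prop} {As : I -> dring m}
  {phi : forall a b, le a b -> {rmorphism As a -> As b}}
  {A' : dring m} {iota : forall a, {rmorphism As a -> A'}}.
Hypotheses (dirI : directed_set le) (sysA : direct_system phi)
  (colim : is_dcolimit phi iota).

Lemma colimit_dhom a : is_dhom (iota a). Proof. by case: colim. Qed.

Lemma colimit_compat a b (h : le a b) x : iota b (phi a b h x) = iota a x.
Proof. by case: colim => _ + _; apply. Qed.

Lemma colimit_to_germs :
  exists u : {rmorphism A' -> germ_dring dirI sysA}, forall a x, u (iota a x) = cl a x.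
Proof.
case: colim => _ _ univ.
have [u [_ uE _]] := univ _ _ (germ_in_dhom dirI sysA) (germ_in_compat dirI sysA).
by exists u.
Qed.

Lemma colimit_exhaustive (y : A') : exists a x, y = iota a x.
Proof.
case: colim => iota_dhom iota_compat univ.
have [u uE] := colimit_to_germs.
pose v : {rmorphism germ_dring dirI sysA -> A'} := germ_factor dirI sysA iota_compat.
have [w [_ _ w_uniq]] := univ _ _ iota_dhom iota_compat.
(* v o u fixes the images of the stages, so it is the identity by uniqueness. *)
have vu : forall y, v (u y) = y.
  move=> z; rewrite -[RHS]/(idfun z) [RHS]w_uniq // -[LHS]/((v \o u)%FUN z).
  by apply: w_uniq => a x /=; rewrite uE germ_factorE.
have [a [x ux]] := germ_at (u y).
by exists a, x; rewrite -[LHS]vu ux germ_factorE.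
Qed.

Lemma colimit_eq {a x b z} : iota a x = iota b z -> germ_rel (phi := phi) a x b z.
Proof.
move=> E; have [u uE] := colimit_to_germs; have := congr1 u E; rewrite !uE.
exact: (proj1 (clP dirI sysA)).
Qed.

Lemma colimit_common (y1 y2 : A') : exists c x1 x2, y1 = iota c x1 /\ y2 = iota c x2.
Proof.
have [a [x1 ->]] := colimit_exhaustive y1; have [b [x2 ->]] := colimit_exhaustive y2.
have [c [hac hbc]] := le_ub dirI a b.
by exists c, (phi a c hac x1), (phi b c hbc x2); rewrite !colimit_compat.
Qed.
End Colimit.

Section ColimitPoints.
Context {m : nat} {I : Type} {le : I -> I -> Prop} {As : I -> dring m}
  {phi : forall a b, le a b -> {rmorphism As a -> As b}}
  {A' : dring m} {iota : forall a, {rmorphism As a -> A'}}.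
Hypotheses (dirI : directed_set le) (sysA : direct_system phi)
  (colim : is_dcolimit phi iota).

Lemma colimit_dSpec_ext (q q' : dSpec A') :
  (forall a, comap (colimit_dhom colim a) q = comap (colimit_dhom colim a) q') -> q = q'.
Proof.
move=> qq'; apply: dspec_eq => y; have [a [x ->]] := colimit_exhaustive dirI sysA colim y.
by move/(congr1 (fun r => sval r x)): (qq' a) => /= ->.
Qed.

Variable p : forall a, dSpec (As a).
Hypothesis p_compat : forall a b (h : le a b) x, sval (p b) (phi a b h x) <-> sval (p a) x.

Definition colimit_ideal (y : A') : Prop := exists a x, y = iota a x /\ sval (p a) x.

Lemma colimit_idealE a x : colimit_ideal (iota a x) <-> sval (p a) x.
Proof.
split=> [[b [z [E pz]]] | px]; last by exists a, x.
have [c [hac [hbc E']]] := colimit_eq dirI sysA colim E.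
by apply/(p_compat _ _ hac); rewrite E'; apply/p_compat.
Qed.

(* Each ideal-theoretic property is checked at a stage where all elements involved live. *)
Lemma colimit_ideal_dprime : is_dprime colimit_ideal.
Proof.
have [a0] : inhabited I by case: dirI.
have common := colimit_common dirI sysA colim.
split; first split.
- rewrite -(rmorph0 (iota a0)); apply/colimit_idealE.
  by case: (svalP (p a0)) => [[]].
- move=> y1 y2; have [c [x1 [x2 [-> ->]]]] := common y1 y2.
  rewrite -rmorphD => /colimit_idealE px1 /colimit_idealE px2; apply/colimit_idealE.
  by case: (svalP (p c)) => [[_ + _ _ _] _]; apply.
- move=> y1 y2; have [c [x1 [x2 [-> ->]]]] := common y1 y2.
  rewrite -rmorphM => /colimit_idealE px2; apply/colimit_idealE.
  by case: (svalP (p c)) => [[_ _ + _ _] _]; apply.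
- rewrite -(rmorph1 (iota a0)) => /colimit_idealE.
  by case: (svalP (p a0)) => [[]].
- move=> y1 y2; have [c [x1 [x2 [-> ->]]]] := common y1 y2.
  rewrite -rmorphM => /colimit_idealE px1x2; have [[_ _ _ _ p_prime] _] := svalP (p c).
  by case: (p_prime _ _ px1x2) => px; [left | right]; apply/colimit_idealE.
- move=> i y [b [z [-> pz]]]; rewrite -(colimit_dhom colim); apply/colimit_idealE.
  by case: (svalP (p b)) => _; apply.
Qed.

Definition colimit_point : dSpec A' := exist _ colimit_ideal colimit_ideal_dprime.

Lemma comap_colimit_point a : comap (colimit_dhom colim a) colimit_point = p a.
Proof. by apply: dspec_eq => x; apply: colimit_idealE. Qed.
End ColimitPoints.

Section LimitOfHomeomorphisms.
Context {m : nat} {A : dring m} {I : Type} {le : I -> I -> Prop} {As : I -> dring m}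
  {phi : forall a b, le a b -> {rmorphism As a -> As b}}
  {nu_ : forall a, {rmorphism A -> As a}} {hnu_ : forall a, is_dhom (nu_ a)}
  {A' : dring m} {iota : forall a, {rmorphism As a -> A'}}
  {nu : {rmorphism A -> A'}} {hnu : is_dhom nu}.
Hypotheses (dirI : directed_set le) (sysA : direct_system phi)
  (nu_compat : forall a b (h : le a b) x, phi a b h (nu_ a x) = nu_ b x)
  (colim : is_dcolimit phi iota) (nu_iota : forall a x, nu x = iota a (nu_ a x)).
Variable inv_ : forall a, dSpec A -> dSpec (As a).
Hypotheses (inv_K : forall a, cancel (comap (hnu_ a)) (inv_ a))
  (K_inv : forall a, cancel (inv_ a) (comap (hnu_ a)))
  (inv_continuous : forall a, kcontinuous (inv_ a)).

Lemma phi_dhom {a b} (h : le a b) : is_dhom (phi a b h).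
Proof. by case: sysA => + _ _; apply. Qed.

Lemma comap_nu_iota a (q : dSpec A') :
  comap hnu q = comap (hnu_ a) (comap (colimit_dhom colim a) q).
Proof. exact: comap_compose. Qed.

(* inv_ b p contracts to inv_ a p, as both contract along nu_a to p. *)
Lemma inv_compat (p : dSpec A) a b (h : le a b) x :
  sval (inv_ b p) (phi a b h x) <-> sval (inv_ a p) x.
Proof.
suff <- : comap (phi_dhom h) (inv_ b p) = inv_ a p by [].
apply: (can_inj (inv_K a)); rewrite K_inv -(comap_compose _ _ (hnu_ b)) => [|y].
- exact: K_inv.
- by rewrite nu_compat.
Qed.

Definition limit_inv (p : dSpec A) : dSpec A' :=
  colimit_point dirI sysA colim (fun a => inv_ a p) (inv_compat p).

Lemma limit_invK : cancel (comap hnu) limit_inv.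
Proof.
move=> q; apply: (colimit_dSpec_ext dirI sysA colim) => a.
by rewrite comap_colimit_point (comap_nu_iota a) inv_K.
Qed.

Lemma limit_K_inv : cancel limit_inv (comap hnu).
Proof.
move=> p; have [a] : inhabited I by case: dirI.
by rewrite (comap_nu_iota a) comap_colimit_point K_inv.
Qed.

(* limit_inv^{-1}(V(E)) is the intersection over a of inv_a^{-1}(V(iota_a^{-1}(E))). *)
Lemma limit_inv_continuous : kcontinuous limit_inv.
Proof.
move=> C [E CE].
pose Cs a (p : dSpec A) := forall x, E (iota a x) -> sval (inv_ a p) x.
apply: (kclosed_bigcap Cs) => [a | p].
  apply: (inv_continuous a (fun r => forall x, E (iota a x) -> sval r x)).
  by exists (fun x => E (iota a x)).
rewrite CE; split=> [pE a x Ex | pE y Ey].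
  by apply/(colimit_idealE dirI sysA colim _ (inv_compat p)); apply: pE.
have [a [x Eyx]] := colimit_exhaustive dirI sysA colim y; subst y.
by apply/(colimit_idealE dirI sysA colim _ (inv_compat p)); apply: pE.
Qed.

Lemma limit_khomeo : khomeo (comap hnu).
Proof.
exists limit_inv; split; [exact: limit_invK | exact: limit_K_inv | | exact: limit_inv_continuous].
exact: comap_continuous.
Qed.
End LimitOfHomeomorphisms.

Theorem lemma2p4 (m : nat) (A : dring m) (I : Type) (le : I -> I -> Prop)
  (As : I -> dring m) (phi : forall a b, le a b -> {rmorphism As a -> As b})
  (nu_ : forall a, {rmorphism A -> As a}) (hnu_ : forall a, is_dhom (nu_ a))
  (A' : dring m) (iota : forall a, {rmorphism As a -> A'})
  (nu : {rmorphism A -> A'}) (hnu : is_dhom nu) :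
  directed_set le ->
  direct_system phi ->
  (forall a b (h : le a b) x, phi a b h (nu_ a x) = nu_ b x) ->
  is_dcolimit phi iota ->
  (forall a x, nu x = iota a (nu_ a x)) ->
  (forall a, khomeo (comap (hnu_ a))) ->
  khomeo (comap hnu).
Proof.
move=> dirI sysA nu_compat colim nu_iota stage_homeo.
pose inv_ a := sval (cid (stage_homeo a)).
have inv_spec a := svalP (cid (stage_homeo a)).
by apply: (limit_khomeo dirI sysA nu_compat colim nu_iota inv_) => a; case: (inv_spec a).
Qed.
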